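(* Let $K$ be an algebraically closed field of characteristic $2$ and let $X=\{a_1\sigma_1^4+a_2\sigma_1^2\sigma_2+a_3\sigma_1\sigma_3+a_4\sigma_4+\beta\sigma_2^2=0\}\subset\mathbb{P}^3_K$ be normal. Then $\mathrm{Sing}(X)$ contains the $\mathfrak{S}_4$-orbit of a point $(0,1,x_3,x_4)$ with $x_3,x_4\neq0$ if and only if this orbit is either (i) the $\mathfrak{S}_4$-orbit (of $12$ points) of a point $(0,1,1,z)$ with $z\neq0,1$, which happens if and only if $a_3=a_2z$, $a_4=a_2z^2$, $\beta=a_1z^4+a_2z^2(1+z)$; or (ii) the $\mathfrak{S}_4$-orbit (of $4$ points) of $(0,1,1,1)$, which happens if and only if $a_2=a_4$ and $\beta=a_1+a_2+a_3$. In case (i) necessarily $a_2\neq0$.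
   Context: $\sigma_i$ is the $i$-th elementary symmetric polynomial in $x_1,\dots,x_4$; $\mathfrak{S}_4$ permutes coordinates. Normal means irreducible with finitely many singular points. *)

From HB Require Import structures.
From mathcomp Require Import all_boot all_order all_algebra.
From mathcomp Require Import fingroup perm.
From mathcomp Require Import mpoly.
Set Implicit Arguments. Unset Strict Implicit. Unset Printing Implicit Defensive.
Import GRing.Theory.
Local Open Scope ring_scope.

Section Defs.
Variable K : closedFieldType.

Definition sig (i : nat) : {mpoly K[4]} := mesym 4 K i.

Definition Fq (a1 a2 a3 a4 b : K) : {mpoly K[4]} :=
  a1 *: sig 1 ^+ 4 + a2 *: (sig 1 ^+ 2 * sig 2) + a3 *: (sig 1 * sig 3)
  + a4 *: sig 4 + b *: sig 2 ^+ 2.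

Definition pt (x1 x2 x3 x4 : K) : 'I_4 -> K :=
  fun i => nth 0 [:: x1; x2; x3; x4] i.

Definition nonzero_vec (v : 'I_4 -> K) : Prop := exists i, v i != 0.

Definition is_sing (F : {mpoly K[4]}) (v : 'I_4 -> K) : Prop :=
  nonzero_vec v /\ F.@[v] = 0 /\ forall i : 'I_4, (mderiv i F).@[v] = 0.

Definition proj_eq (v w : 'I_4 -> K) : Prop :=
  exists2 l : K, l != 0 & forall i, v i = l * w i.

Definition in_orbit (v w : 'I_4 -> K) : Prop :=
  exists s : 'S_4, proj_eq v (fun i => w (s i)).

Definition orbit_in_sing (F : {mpoly K[4]}) (w : 'I_4 -> K) : Prop :=
  forall v, in_orbit v w -> is_sing F v.

Definition same_orbit (v w : 'I_4 -> K) : Prop :=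
  forall u, in_orbit u v <-> in_orbit u w.

Definition orbit_card (w : 'I_4 -> K) (k : nat) : Prop :=
  exists s : seq ('I_4 -> K),
    size s = k /\ (forall i, (i < k)%N -> in_orbit (nth (fun _ => 0) s i) w)
    /\ (forall i j, (i < k)%N -> (j < k)%N -> i <> j ->
          ~ proj_eq (nth (fun _ => 0) s i) (nth (fun _ => 0) s j))
    /\ (forall u, in_orbit u w ->
          exists2 i, (i < k)%N & proj_eq u (nth (fun _ => 0) s i)).

Definition mirreducible (F : {mpoly K[4]}) : Prop :=
  F \isn't a GRing.unit /\ F != 0 /\
  forall G H : {mpoly K[4]}, F = G * H -> G \is a GRing.unit \/ H \is a GRing.unit.

Definition finitely_many_sing (F : {mpoly K[4]}) : Prop :=
  exists s : seq ('I_4 -> K), forall v, is_sing F v ->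
    exists2 i, (i < size s)%N & proj_eq v (nth (fun _ => 0) s i).

Definition normal_surface (F : {mpoly K[4]}) : Prop :=
  mirreducible F /\ finitely_many_sing F.

End Defs.

From Pilot Require Import Defs.
From HB Require Import structures.
From mathcomp Require Import all_boot all_order all_algebra.
From mathcomp Require Import fingroup perm.
From mathcomp Require Import mpoly.
From mathcomp Require Import ring.
Import GRing.Theory.
Local Open Scope ring_scope.

(* Singularity is invariant under permuting and scaling coordinates, so the
   orbit of (0,1,x,y) lies in Sing(X) iff that single point is singular.  In
   characteristic 2, d F / d x_i is a polynomial in sigma_1, sigma_2, sigma_3
   and x_i in which a1 and b no longer occur.  Evaluated at x_i = x and
   x_i = y it shows that when 1, x, y are pairwise distinct a3 = a4 = 0; then
   F is a binary quadratic form in sigma_1^2 and sigma_2, which splits over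
   the algebraically closed field K, contradicting irreducibility.  Otherwise
   the point is, up to symmetry and scaling, (0,1,1,z), where the singularity
   conditions are computed directly.  A point of that orbit is determined by
   the positions of its coordinates 0 and z, because z^2 = 1 forces z = 1 in
   characteristic 2. *)

Lemma meval_mesym (R : comNzRingType) n k (v : 'I_n -> R) :
  (mesym n R k).@[v] = \sum_(h : {set 'I_n} | #|h| == k) \prod_(i in h) v i.
Proof.
rewrite /mesym rmorph_sum; apply: eq_bigr => h _.
by rewrite rmorph_prod; apply: eq_bigr => i _; apply: mevalXU.
Qed.

Lemma meval_mesym_perm_scale (R : comNzRingType) n k (l : R) (s : 'S_n)
    (v : 'I_n -> R) :
  (mesym n R k).@[fun i => l * v (s i)] = l ^+ k * (mesym n R k).@[v].
Proof.
rewrite !meval_mesym mulr_sumr.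
rewrite (reindex (fun h : {set 'I_n} => (s^-1)%g @: h)) /=; last first.
  exists (fun h : {set 'I_n} => s @: h) => h _; rewrite -imset_comp;
  by rewrite (eq_imset (g:=id)) ?imset_id // => x /=; rewrite ?permK ?permKV.
apply: eq_big => h; rewrite card_imset //; last exact: perm_inj.
  exact: perm_inj.
move=> /eqP hk; rewrite big_imset /=; last by move=> x y _ _; apply: perm_inj.
rewrite big_split /= prodr_const hk; congr (_ * _).
by apply: eq_bigr => i _; rewrite permKV.
Qed.

Lemma meval_unit_neq0 {R : idomainType} {n} (v : 'I_n -> R) (p : {mpoly R[n]}) :
  p \is a GRing.unit -> p.@[v] != 0.
Proof.
case/unitrP=> q [qp _]; apply/eqP=> pv0; move/(congr1 (meval v)): qp.
by rewrite mevalM meval1 pv0 mulr0 => /eqP; rewrite eq_sym oner_eq0.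
Qed.

Lemma addr_eq0_pchar2 (R : nzRingType) (u v : R) :
  (2 \in [pchar R])%N -> (u + v == 0) = (u == v).
Proof. by move=> pchar2; rewrite addr_eq0 oppr_pchar2. Qed.

Definition o0 : 'I_4 := @Ordinal 4 0 isT.
Definition o1 : 'I_4 := @Ordinal 4 1 isT.
Definition o2 : 'I_4 := @Ordinal 4 2 isT.
Definition o3 : 'I_4 := @Ordinal 4 3 isT.

Lemma ord4P (i : 'I_4) : [\/ i = o0, i = o1, i = o2 | i = o3].
Proof.
case: i => [[|[|[|[|m]]]] lti] //;
  [constructor 1 | constructor 2 | constructor 3 | constructor 4]; exact: val_inj.
Qed.

Section Sigma.
Context {K : closedFieldType}.
Local Notation X i := ('X_i : {mpoly K[4]}).

Definition mpolyX_nat (k : nat) : {mpoly K[4]} := X (nth o0 [:: o0; o1; o2; o3] k).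

(* Rewriting with [mpolyX_ord4] and simplifying turns the ordinals produced
   by [big_ord_recr] into [o0], ..., [o3]. *)
Lemma mpolyX_ord4 (i : 'I_4) : X i = mpolyX_nat i.
Proof. by case: (ord4P i) => ->. Qed.

Lemma sig1E : sig K 1 = X o0 + X o1 + X o2 + X o3.
Proof. by rewrite /sig mesym1E !big_ord_recr big_ord0 /= !mpolyX_ord4 /= add0r. Qed.

Lemma sig2E : sig K 2 =
  X o0 * X o1 + X o0 * X o2 + X o0 * X o3 + X o1 * X o2 + X o1 * X o3 + X o2 * X o3.
Proof.
rewrite /sig (mesymSS K 3 1) (mesymSS K 2 1) !mesymnnE !mesym1E.
rewrite !big_ord_recr !big_ord0.
rewrite !(mwidenD, mwidenM, mwidenX, mnmwiden1, mwiden0, mwiden1).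
by rewrite !mpolyX_ord4 /=; ring.
Qed.

Lemma sig3E : sig K 3 =
  X o0 * X o1 * X o2 + X o0 * X o1 * X o3 + X o0 * X o2 * X o3 + X o1 * X o2 * X o3.
Proof.
rewrite /sig (mesymSS K 3 2) (mesymSS K 2 1) !mesymnnE !mesym1E.
rewrite !big_ord_recr !big_ord0.
rewrite !(mwidenD, mwidenM, mwidenX, mnmwiden1, mwiden0, mwiden1).
by rewrite !mpolyX_ord4 /=; ring.
Qed.

Lemma sig4E : sig K 4 = X o0 * X o1 * X o2 * X o3.
Proof. by rewrite /sig mesymnnE !big_ord_recr big_ord0 /= !mpolyX_ord4 /= mul1r. Qed.

Lemma sig_eval v :
  [/\ (sig K 1).@[v] = v o0 + v o1 + v o2 + v o3,
      (sig K 2).@[v] = v o0 * v o1 + v o0 * v o2 + v o0 * v o3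
                       + v o1 * v o2 + v o1 * v o3 + v o2 * v o3,
      (sig K 3).@[v] = v o0 * v o1 * v o2 + v o0 * v o1 * v o3
                       + v o0 * v o2 * v o3 + v o1 * v o2 * v o3
    & (sig K 4).@[v] = v o0 * v o1 * v o2 * v o3].
Proof. by rewrite sig1E sig2E sig3E sig4E !(mevalD, mevalM, mevalXU). Qed.

Lemma mderivX_ord (i j : 'I_4) : mderiv i (X j) = (j == i)%:R.
Proof.
rewrite mderivX mnm1E; case: eqP => [->|_]; last by rewrite scale0r.
by rewrite -{1}(add0m U_(i)%MM) addmK mpolyX0 scale1r.
Qed.

End Sigma.

Section Surface.
Context {K : closedFieldType} {a1 a2 a3 a4 b : K}.
Local Notation F := (Fq a1 a2 a3 a4 b).

Definition Fsig (s1 s2 s3 s4 : K) :=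
  a1 * s1 ^+ 4 + a2 * (s1 ^+ 2 * s2) + a3 * (s1 * s3) + a4 * s4 + b * s2 ^+ 2.

(* d F / d x_i at a point with coordinate x_i = t, obtained from
   d sigma_k / d x_i = sigma_(k-1) - x_i * d sigma_(k-1) / d x_i. *)
Definition dFsig (s1 s2 s3 t : K) :=
  a1 * (4 * s1 ^+ 3) + a2 * (2 * s1 * s2 + s1 ^+ 2 * (s1 - t))
  + a3 * (s3 + s1 * (s2 - t * (s1 - t))) + a4 * (s3 - t * (s2 - t * (s1 - t)))
  + b * (2 * s2 * (s1 - t)).

Lemma Fq_eval v :
  F.@[v] = Fsig (sig K 1).@[v] (sig K 2).@[v] (sig K 3).@[v] (sig K 4).@[v].
Proof. by rewrite /Fq !(mevalD, mevalM, mevalZ, rmorphXn). Qed.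

Lemma mderiv_Fq_eval i v :
  (mderiv i F).@[v] = dFsig (sig K 1).@[v] (sig K 2).@[v] (sig K 3).@[v] (v i).
Proof.
have [-> -> -> _] := sig_eval v.
rewrite /Fq sig1E sig2E sig3E sig4E !(expr2, exprS, expr0, mulr1).
rewrite !(mderivD, mderivZ, mderivM) !mderivX_ord.
rewrite !(mevalD, mevalM, mevalZ, mevalXU, rmorph_nat) /dFsig.
by case: (ord4P i) => -> /=; ring.
Qed.

Lemma is_sing_eq v w : v =1 w -> is_sing F v -> is_sing F w.
Proof.
move=> e [[i vi] [Fv dFv]]; split; first by exists i; rewrite -e.
by split=> [|j]; rewrite -(meval_eq _ e).
Qed.

Lemma Fsig_scale (l s1 s2 s3 s4 : K) :
  Fsig (l ^+ 1 * s1) (l ^+ 2 * s2) (l ^+ 3 * s3) (l ^+ 4 * s4) =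
  l ^+ 4 * Fsig s1 s2 s3 s4.
Proof. by rewrite /Fsig; ring. Qed.

Lemma dFsig_scale (l s1 s2 s3 t : K) :
  dFsig (l ^+ 1 * s1) (l ^+ 2 * s2) (l ^+ 3 * s3) (l * t) = l ^+ 3 * dFsig s1 s2 s3 t.
Proof. by rewrite /dFsig; ring. Qed.

Lemma is_sing_perm_scale (l : K) (s : 'S_4) w :
  l != 0 -> is_sing F w -> is_sing F (fun i => l * w (s i)).
Proof.
move=> l0 [[i wi] [Fw dFw]].
split; first by exists (s^-1 i)%g; rewrite permKV mulf_neq0.
split=> [|j].
  by rewrite Fq_eval !meval_mesym_perm_scale Fsig_scale -Fq_eval Fw mulr0.
by rewrite mderiv_Fq_eval !meval_mesym_perm_scale dFsig_scale -mderiv_Fq_eval dFw mulr0.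
Qed.

Lemma orbit_in_singE w : orbit_in_sing F w <-> is_sing F w.
Proof.
split=> [|Fw v [s [l l0 vE]]].
  by apply; exists 1%g, 1 => [|i]; rewrite ?oner_neq0 ?perm1 ?mul1r.
apply: (@is_sing_eq (fun i => l * w (s i))) => [i|]; first by rewrite vE.
exact: is_sing_perm_scale.
Qed.

Lemma is_sing_pt01E (x y : K) :
  let s1 := 1 + x + y in let s2 := x + y + x * y in let s3 := x * y in
  is_sing F (pt 0 1 x y) <->
  [/\ Fsig s1 s2 s3 0 = 0, dFsig s1 s2 s3 0 = 0, dFsig s1 s2 s3 1 = 0,
      dFsig s1 s2 s3 x = 0 & dFsig s1 s2 s3 y = 0].
Proof.
have [e1 e2 e3 e4] := sig_eval (pt 0 1 x y).
have s1E : (sig K 1).@[pt 0 1 x y] = 1 + x + y by rewrite e1 /pt /=; ring.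
have s2E : (sig K 2).@[pt 0 1 x y] = x + y + x * y by rewrite e2 /pt /=; ring.
have s3E : (sig K 3).@[pt 0 1 x y] = x * y by rewrite e3 /pt /=; ring.
have s4E : (sig K 4).@[pt 0 1 x y] = 0 by rewrite e4 /pt /=; ring.
have FE : F.@[pt 0 1 x y] = Fsig (1 + x + y) (x + y + x * y) (x * y) 0.
  by rewrite Fq_eval s1E s2E s3E s4E.
have dFE i : (mderiv i F).@[pt 0 1 x y] =
             dFsig (1 + x + y) (x + y + x * y) (x * y) (pt 0 1 x y i).
  by rewrite mderiv_Fq_eval s1E s2E s3E.
rewrite /= /is_sing FE; split=> [[_ [F0 dF0]] | [F0 d0 d1 dx dy]].
  by move: (dF0 o0) (dF0 o1) (dF0 o2) (dF0 o3); rewrite !dFE.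
split; first by exists o1; rewrite /= oner_neq0.
by split=> // i; rewrite dFE; case: (ord4P i) => ->.
Qed.

Section Char2.
Hypothesis pchar2 : (2 \in [pchar K])%N.

(* Identities modulo 2 are proved by [ring] once the multiple of 2 by which
   the two sides differ is exhibited. *)
Let eq_mod2 (w x y : K) : x = y + 2 * w -> x = y.
Proof. by rewrite (pcharf0 pchar2) mul0r addr0. Qed.

Let addr1_neq0 (t : K) : t != 1 -> 1 + t != 0.
Proof. by rewrite addr_eq0_pchar2 // eq_sym. Qed.

Lemma dFsig_pchar2 (s1 s2 s3 t : K) : dFsig s1 s2 s3 t =
  a2 * (s1 ^+ 2 * (s1 - t)) + a3 * (s3 + s1 * (s2 - t * (s1 - t)))
  + a4 * (s3 - t * (s2 - t * (s1 - t))).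
Proof.
apply: (eq_mod2 (a1 * (2 * s1 ^+ 3) + a2 * (s1 * s2) + b * (s2 * (s1 - t)))).
by rewrite /dFsig; ring.
Qed.

Lemma is_sing_pt01_distinct {x y : K} :
  x != 0 -> y != 0 -> x != 1 -> y != 1 -> x != y ->
  is_sing F (pt 0 1 x y) -> a3 = 0 /\ a4 = 0.
Proof.
move=> x0 y0 x1 y1 xy /is_sing_pt01E [_ d0 _ dx dy].
set s1 := 1 + x + y in d0 dx dy.
have /eqP : (1 + y) * (a2 * s1 ^+ 2 + a3 * y) = 0.
  by rewrite -dx dFsig_pchar2 /s1; apply: (eq_mod2 (- (a3 * (x * y)))); ring.
rewrite mulf_eq0 (negbTE (addr1_neq0 _ y1)) => /eqP Ex.
have /eqP : (1 + x) * (a2 * s1 ^+ 2 + a3 * x) = 0.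
  by rewrite -dy dFsig_pchar2 /s1; apply: (eq_mod2 (- (a3 * (x * y)))); ring.
rewrite mulf_eq0 (negbTE (addr1_neq0 _ x1)) => /eqP Ey.
have a30 : a3 = 0.
  have : a3 * (y - x) = (a2 * s1 ^+ 2 + a3 * y) - (a2 * s1 ^+ 2 + a3 * x) by ring.
  rewrite Ex Ey subrr => /eqP; rewrite mulf_eq0 subr_eq0 (eq_sym y) (negbTE xy) orbF.
  by move/eqP.
have : a2 * s1 ^+ 2 * s1 + a4 * (x * y) + a3 * (x * y + s1 * (x + y + x * y)) = 0.
  by rewrite -d0 dFsig_pchar2 /s1; ring.
move: Ex; rewrite a30 !mul0r addr0 => ->; rewrite mul0r add0r addr0 => /eqP.
by rewrite !mulf_eq0 (negbTE x0) (negbTE y0) !orbF => /eqP.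
Qed.

Lemma is_sing_pt011E (z : K) : z != 0 -> z != 1 ->
  is_sing F (pt 0 1 1 z) <->
  [/\ a3 = a2 * z, a4 = a2 * z ^+ 2 & b = a1 * z ^+ 4 + a2 * z ^+ 2 * (1 + z)].
Proof.
move=> z0 z1; rewrite is_sing_pt01E /= mul1r.
have -> : 1 + 1 + z = z by apply: (eq_mod2 1); ring.
have -> : 1 + z + z = 1 by apply: (eq_mod2 z); ring.
have -> : Fsig z 1 z 0 = a1 * z ^+ 4 + a2 * z ^+ 2 + a3 * z ^+ 2 + b.
  by rewrite /Fsig; ring.
have -> : dFsig z 1 z 0 = z * (a2 * z ^+ 2 + a4).
  by rewrite dFsig_pchar2; apply: (eq_mod2 (a3 * z)); ring.
have -> : dFsig z 1 z 1 = z * (1 + z) * (a2 * z + a3).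
  rewrite dFsig_pchar2.
  by apply: (eq_mod2 (- (a2 * z ^+ 2) + a3 * (z - z ^+ 2) + a4 * (z - 1))); ring.
have -> : dFsig z 1 z z = 0.
  by rewrite dFsig_pchar2; apply: (eq_mod2 (a3 * z)); ring.
split=> [[F0 /eqP d0 /eqP d1 _ _] | [-> -> ->]].
  move: d0 d1; rewrite !mulf_eq0 (negbTE z0) (negbTE (addr1_neq0 _ z1)) /=.
  rewrite !addr_eq0_pchar2 // => /eqP a4E /eqP a3E.
  split; [by rewrite a3E | by rewrite a4E |].
  apply/eqP; rewrite -addr_eq0_pchar2 //; apply/eqP.
  by rewrite -a3E in F0; rewrite -F0; ring.
split=> //.
- by apply: (eq_mod2 (a1 * z ^+ 4 + a2 * z ^+ 2 + a2 * z ^+ 3)); ring.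
- by apply: (eq_mod2 (z * (a2 * z ^+ 2))); ring.
- by apply: (eq_mod2 (z * (1 + z) * (a2 * z))); ring.
- by apply: (eq_mod2 (z * (1 + z) * (a2 * z))); ring.
Qed.

Lemma is_sing_pt0111E : is_sing F (pt 0 1 1 1) <-> a2 = a4 /\ b = a1 + a2 + a3.
Proof.
rewrite is_sing_pt01E /= mul1r.
have -> : 1 + 1 + 1 = 1 :> K by apply: (eq_mod2 1); ring.
have -> : Fsig 1 1 1 0 = a1 + a2 + a3 + b by rewrite /Fsig; ring.
have -> : dFsig 1 1 1 0 = a2 + a4.
  by rewrite dFsig_pchar2; apply: (eq_mod2 a3); ring.
have -> : dFsig 1 1 1 1 = 0.
  by rewrite dFsig_pchar2; apply: (eq_mod2 a3); ring.
split=> [[/eqP F0 /eqP d0 _ _ _] | [<- ->]].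
  by move: F0 d0; rewrite !addr_eq0_pchar2 // => /eqP <- /eqP.
split=> //.
- by apply: (eq_mod2 (a1 + a2 + a3)); ring.
- by apply: (eq_mod2 a2); ring.
Qed.

End Char2.

End Surface.

Section Orbits.
Context {K : closedFieldType}.

Lemma same_orbit_perm_scale (v w : 'I_4 -> K) (s : 'S_4) (l : K) :
  l != 0 -> (forall i, w i = l * v (s i)) -> same_orbit v w.
Proof.
move=> l0 wE u; split=> [[t [m m0 uE]] | [t [m m0 uE]]].
  exists (t * s^-1)%g, (m / l) => [|i]; first by rewrite mulf_neq0 ?invr_eq0.
  by rewrite uE permM wE permKV mulrA divfK.
exists (t * s)%g, (m * l) => [|i]; first by rewrite mulf_neq0.
by rewrite uE permM wE mulrA.
Qed.

Lemma pt01_orbit_repeated (x y : K) :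
  x != 0 -> y != 0 -> ~~ [&& x != 1, y != 1 & x != y] ->
  (exists z : K, [/\ z != 0, z != 1 & same_orbit (pt 0 1 x y) (pt 0 1 1 z)])
  \/ same_orbit (pt 0 1 x y) (pt 0 1 1 1).
Proof.
move=> x0 y0 repeated.
have [-> | x1] := eqVneq x 1.
  have [-> | y1] := eqVneq y 1; first by right=> u; split.
  by left; exists y; split=> // u; split.
have [-> | y1] := eqVneq y 1.
  left; exists x; split=> //.
  apply: (@same_orbit_perm_scale _ _ (tperm o2 o3) 1) => [|i]; first exact: oner_neq0.
  by case: (ord4P i) => ->; rewrite ?tpermL ?tpermR ?tpermD // mul1r.
have xy : x = y by apply/eqP; move: repeated; rewrite x1 y1 /= negbK.
left; exists x^-1; rewrite invr_eq0 invr_eq1; split=> //.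
rewrite -xy; apply: (@same_orbit_perm_scale _ _ (tperm o1 o3) x^-1).
  by rewrite invr_eq0.
move=> i; case: (ord4P i) => ->; rewrite ?tpermL ?tpermR ?tpermD //=.
- by rewrite mulr0.
- by rewrite mulVf.
- by rewrite mulVf.
- by rewrite mulr1.
Qed.

Definition pt_at (z : K) (p q : 'I_4) : 'I_4 -> K :=
  fun i => if i == p then 0 else if i == q then z else 1.

Lemma pt011_perm (z : K) (s : 'S_4) i :
  pt 0 1 1 z (s i) = pt_at z (s^-1 o0)%g (s^-1 o3)%g i.
Proof.
rewrite /pt_at -[i == _](inj_eq (@perm_inj _ s)) permKV.
rewrite -[i == _](inj_eq (@perm_inj _ s)) permKV.
by case: (ord4P (s i)) => ->.
Qed.

Lemma pt_at1 (p q : 'I_4) : pt_at 1 p q =1 pt_at 1 p p.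
Proof. by move=> i; rewrite /pt_at; case: ifP => //; case: ifP. Qed.

Lemma perm_to_o0_o3 {p q : 'I_4} : p != q -> exists s : 'S_4, s p = o0 /\ s q = o3.
Proof.
move=> pq; have q'0 : tperm p o0 q != o0.
  by rewrite -[X in _ != X](tpermL p o0) (inj_eq perm_inj) eq_sym.
exists (tperm p o0 * tperm (tperm p o0 q) o3)%g.
by rewrite !permM tpermL (tpermD q'0) ?tpermL.
Qed.

Lemma pt_at_in_orbit (z : K) (p q : 'I_4) :
  p != q -> Defs.in_orbit (pt_at z p q) (pt 0 1 1 z).
Proof.
move=> pq; have [s [sp sq]] := perm_to_o0_o3 pq.
exists s, 1 => [|i]; first exact: oner_neq0.
by rewrite mul1r pt011_perm -sp -sq !permK.
Qed.

Lemma pt_at1_in_orbit (p : 'I_4) : Defs.in_orbit (pt_at 1 p p) (pt 0 1 1 1).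
Proof.
exists (tperm p o0), 1 => [|i]; first exact: oner_neq0.
by rewrite mul1r pt011_perm tpermV tpermR pt_at1.
Qed.

Lemma pt_at_zero_inj {z : K} {p q p' q' : 'I_4} :
  z != 0 -> proj_eq (pt_at z p q) (pt_at z p' q') -> p = p'.
Proof.
move=> z0 [l _ /(_ p')]; rewrite /pt_at eqxx mulr0.
by case: eqP => // _; case: eqP => _ /eqP; rewrite ?(negbTE z0) ?oner_eq0.
Qed.

Lemma pt_at_inj (z : K) (p q p' q' : 'I_4) : (2 \in [pchar K])%N ->
  z != 0 -> z != 1 -> p != q -> p' != q' ->
  proj_eq (pt_at z p q) (pt_at z p' q') -> (p, q) = (p', q').
Proof.
move=> pchar2 z0 z1 pq pq' E; have pp' := pt_at_zero_inj z0 E; subst p'.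
have [l _ {}E] := E; congr pair; apply/eqP; apply: contraT => qq'.
have [qp q'p] : q != p /\ q' != p by rewrite !(eq_sym _ p).
move: (E q) (E q'); rewrite /pt_at !eqxx (negbTE qp) (negbTE q'p) (negbTE qq').
rewrite (eq_sym q') (negbTE qq') mulr1 => <- /esym/eqP; rewrite -expr2 sqrf_eq1.
by rewrite oppr_pchar2 // orbb (negbTE z1).
Qed.

Lemma orbit_card_enum (T : eqType) (L : seq T) (f : T -> 'I_4 -> K) (w : 'I_4 -> K) :
  uniq L -> {in L, forall t, Defs.in_orbit (f t) w} ->
  {in L &, forall t t', proj_eq (f t) (f t') -> t = t'} ->
  (forall u, Defs.in_orbit u w -> exists2 t, t \in L & proj_eq u (f t)) ->
  orbit_card w (size L).
Proof.
case: L => [_ _ _ cover | t0 L uL orbL injL cover].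
  by exists [::]; split=> //; split=> //; split=> // u /cover [].
exists (map f (t0 :: L)); rewrite size_map; split=> //.
split=> [i ilt|]; first by rewrite (nth_map t0) //; apply/orbL/mem_nth.
split=> [i j ilt jlt ij|u /cover [t tL ut]].
  rewrite !(nth_map t0) // => /injL E; apply: ij.
  by apply/eqP; rewrite -(nth_uniq t0 ilt jlt uL) E ?mem_nth.
by exists (index t (t0 :: L)); rewrite ?index_mem ?(nth_map t0) ?index_mem ?nth_index.
Qed.

Definition ord4_pairs : seq ('I_4 * 'I_4) :=
  [:: (o0, o1); (o0, o2); (o0, o3); (o1, o0); (o1, o2); (o1, o3);
      (o2, o0); (o2, o1); (o2, o3); (o3, o0); (o3, o1); (o3, o2)].

Lemma orbit_card_pt011 (z : K) : (2 \in [pchar K])%N ->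
  z != 0 -> z != 1 -> orbit_card (pt 0 1 1 z) 12.
Proof.
move=> pchar2 z0 z1.
have pairsP (pq : 'I_4 * 'I_4) : (pq \in ord4_pairs) = (pq.1 != pq.2).
  by case: pq => p q; case: (ord4P p) => ->; case: (ord4P q) => ->.
rewrite -[12%N]/(size ord4_pairs).
apply: (@orbit_card_enum _ ord4_pairs (fun pq => pt_at z pq.1 pq.2)) => //.
- by move=> [p q]; rewrite pairsP; apply: pt_at_in_orbit.
- move=> [p q] [p' q']; rewrite !pairsP; exact: pt_at_inj.
move=> u [s [l l0 uE]]; exists ((s^-1 o0)%g, (s^-1 o3)%g).
  by rewrite pairsP /= (inj_eq perm_inj).
by exists l => // i; rewrite uE pt011_perm.
Qed.

Lemma orbit_card_pt0111 : orbit_card (pt 0 1 1 (1 : K)) 4.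
Proof.
have ord4_enum (p : 'I_4) : p \in [:: o0; o1; o2; o3] by case: (ord4P p) => ->.
rewrite -[4%N]/(size [:: o0; o1; o2; o3]).
apply: (@orbit_card_enum _ [:: o0; o1; o2; o3] (fun p => pt_at 1 p p)) => //.
- by move=> p _; apply: pt_at1_in_orbit.
- by move=> p p' _ _; apply: pt_at_zero_inj; apply: oner_neq0.
move=> u [s [l l0 uE]]; exists (s^-1 o0)%g => //.
by exists l => // i; rewrite uE pt011_perm pt_at1.
Qed.

End Orbits.

Lemma quadratic_form_factor {K : closedFieldType} (c1 c2 c3 : K) :
  exists p q r t, [/\ p * r = c1, p * t + q * r = c2 & q * t = c3].
Proof.
have [-> | c1_neq0] := eqVneq c1 0; first by exists 0, 1, c2, c3; split; ring.
have [x] := @solve_monicpoly K 2 (nth 0 [:: - c3 / c1; - c2 / c1]) isT.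
rewrite !big_ord_recr big_ord0 /= expr0 expr1 => xE.
exists c1, (- c1 * x), 1, (c2 / c1 + x); split; [by rewrite mulr1 | by field |].
have -> : - c1 * x * (c2 / c1 + x) = - c1 * x ^+ 2 - c2 * x by field.
by rewrite xE; field.
Qed.

Lemma Fq_reducible {K : closedFieldType} (a1 a2 b : K) :
  ~ mirreducible (Fq a1 a2 0 0 b).
Proof.
move=> [_ [_ irrF]]; have [p [q [r [t [pr ptqr qt]]]]] := quadratic_form_factor a1 a2 b.
pose G (c d : K) := c *: sig K 1 ^+ 2 + d *: sig K 2.
have G0 c d : (G c d).@[fun _ => 0] = 0.
  rewrite /G !(mevalD, mevalZ, mevalM, expr2).
  by have [-> -> _ _] := sig_eval (K := K) (fun _ => 0); ring.
have /irrF [] : Fq a1 a2 0 0 b = G p q * G r t.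
  rewrite /Fq /G !scale0r !addr0 -!mul_mpolyC -pr -ptqr -qt !rmorphD !rmorphM /=; ring.
all: by move/(meval_unit_neq0 (fun _ => 0)); rewrite G0 eqxx.
Qed.

Theorem lemma4p5 (K : closedFieldType) (a1 a2 a3 a4 b : K) :
  (2 \in [pchar K])%N ->
  normal_surface (Fq a1 a2 a3 a4 b) ->
  (forall x3 x4 : K, x3 != 0 -> x4 != 0 ->
     orbit_in_sing (Fq a1 a2 a3 a4 b) (pt 0 1 x3 x4) ->
     (exists z : K, [/\ z != 0, z != 1 & same_orbit (pt 0 1 x3 x4) (pt 0 1 1 z)])
     \/ same_orbit (pt 0 1 x3 x4) (pt 0 1 1 (1 : K)))
  /\ (forall z : K, z != 0 -> z != 1 ->
     orbit_card (pt 0 1 1 z) 12 /\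
     (orbit_in_sing (Fq a1 a2 a3 a4 b) (pt 0 1 1 z) <->
      [/\ a3 = a2 * z, a4 = a2 * z ^+ 2 & b = a1 * z ^+ 4 + a2 * z ^+ 2 * (1 + z)]))
  /\ (orbit_card (pt 0 1 1 (1 : K)) 4 /\
     (orbit_in_sing (Fq a1 a2 a3 a4 b) (pt 0 1 1 (1 : K)) <->
      a2 = a4 /\ b = a1 + a2 + a3))
  /\ (forall z : K, z != 0 -> z != 1 ->
     orbit_in_sing (Fq a1 a2 a3 a4 b) (pt 0 1 1 z) -> a2 != 0).
Proof.
move=> pchar2 [irrF _].
have a34 : ~ (a3 = 0 /\ a4 = 0).
  by case=> a30 a40; move: irrF; rewrite a30 a40; apply: Fq_reducible.
split=> [x y x0 y0 /orbit_in_singE singF|].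
  have [/and3P [x1 y1 xy] | repeated] := boolP [&& x != 1, y != 1 & x != y].
    by case: a34; apply: (is_sing_pt01_distinct pchar2 x0 y0 x1 y1 xy singF).
  exact: pt01_orbit_repeated.
split=> [z z0 z1|].
  by rewrite orbit_in_singE is_sing_pt011E //; split=> //; apply: orbit_card_pt011.
split.
  by rewrite orbit_in_singE is_sing_pt0111E //; split=> //; apply: orbit_card_pt0111.
move=> z z0 z1; rewrite orbit_in_singE is_sing_pt011E // => -[a3E a4E _].
by apply: contra_notN a34 => /eqP a20; rewrite a3E a4E a20 !mul0r.
Qed.
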